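(* Let $\pi\in S_n$. The set of source cells of $\beta_\pi$ is exactly $\{B_{i,\pi(i)}:1\le i\le n\}$, where $B_{i,j}$ denotes the 4-cell of $G$ with top $c_i\vee d_j$.
   Context: $G$ is the direct product of chains $0=c_0\prec\dots\prec c_n$ and $0=d_0\prec\dots\prec d_n$, elements written $c_i\vee d_j$. For $i,j\ge1$, $B_{i,j}=\{c_{i-1}\vee d_{j-1},c_{i-1}\vee d_j,c_i\vee d_{j-1},c_i\vee d_j\}$. For a join-congruence $\alpha$ (equivalence compatible with $\vee$), $B_{i,j}$ is a source cell of $\alpha$ if $c_{i-1}\vee d_j$, $c_i\vee d_{j-1}$, $c_i\vee d_j$ lie in one $\alpha$-class not containing $c_{i-1}\vee d_{j-1}$. For $\pi\in S_n$, $\beta_\pi$ is the join, in the lattice of join-congruences of $(G;\vee)$, of the smallest join-congruences collapsing $\{c_{i-1}\vee d_{\pi(i)},c_i\vee d_{\pi(i)-1},c_i\vee d_{\pi(i)}\}$, $i=1,\dots,n$. *)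

From mathcomp Require Import all_boot all_fingroup.
Set Implicit Arguments. Unset Strict Implicit. Unset Printing Implicit Defensive.

(* G = direct product of chains 0=c_0<...<c_n and 0=d_0<...<d_n.
   The element c_a \/ d_b is represented by the pair (a, b). *)
Definition G (n : nat) : finType := ('I_n.+1 * 'I_n.+1)%type.

(* c_a \/ d_b, for a, b <= n (inord truncates nothing in that range) *)
Definition cd (n a b : nat) : G n := (inord a, inord b).

Definition gjoin n (x y : G n) : G n :=
  (inord (maxn x.1 y.1), inord (maxn x.2 y.2)).

Definition join_congruence n (R : G n -> G n -> Prop) : Prop :=
  [/\ (forall x, R x x),
      (forall x y, R x y -> R y x),
      (forall x y z, R x y -> R y z -> R x z) &
      (forall x y z, R x y -> R (gjoin x z) (gjoin y z))].

Definition source_cell n (R : G n -> G n -> Prop) (a b : nat) : Prop :=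
  R (cd n a.-1 b) (cd n a b) /\ R (cd n a b.-1) (cd n a b) /\
  ~ R (cd n a.-1 b.-1) (cd n a b).

(* beta_pi: the least join-congruence collapsing, for each i = 1..n, the
   triple {c_{i-1} \/ d_{pi(i)}, c_i \/ d_{pi(i)-1}, c_i \/ d_{pi(i)}}.
   Index i : 'I_n stands for i+1, and pi(i+1) = (pi i)+1. *)
Definition beta n (pi : {perm 'I_n}) (x y : G n) : Prop :=
  forall R : G n -> G n -> Prop, join_congruence R ->
    (forall i : 'I_n,
       R (cd n i (pi i).+1) (cd n i.+1 (pi i).+1) /\
       R (cd n i.+1 (pi i)) (cd n i.+1 (pi i).+1)) ->
    R x y.

(* Each generator of beta_pi exhibits B_{i,pi(i)} as a source cell.  Conversely,
   for each i the indicator of the complement of the principal ideal generated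
   by c_{i-1} \/ d_{pi(i)-1} is a join-homomorphism into the two-element
   semilattice that identifies both sides of every generator, so beta_pi lies
   in its kernel.  This keeps the bottom of B_{i,pi(i)} apart from its top, and
   shows that j >= pi(i) whenever B_{i,j} is a source cell.  If j > pi(i),
   joining the generator c_{i-1} \/ d_{pi(i)} ~ c_i \/ d_{pi(i)} with d_{j-1}
   collapses c_{i-1} \/ d_{j-1} with c_i \/ d_{j-1}, hence with the top of
   B_{i,j}, so B_{i,j} is not a source cell. *)
From mathcomp Require Import all_boot all_fingroup.
Set Implicit Arguments. Unset Strict Implicit.

Section BetaPi.

Variable n : nat.

Lemma cd_fst (a b : nat) : (a <= n)%N -> ((cd n a b).1 : nat) = a.
Proof. by move=> le_an; rewrite /= inordK. Qed.

Lemma cd_snd (a b : nat) : (b <= n)%N -> ((cd n a b).2 : nat) = b.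
Proof. by move=> le_bn; rewrite /= inordK. Qed.

Lemma gjoin_cd (a b a' b' : nat) :
  (a <= n)%N -> (b <= n)%N -> (a' <= n)%N -> (b' <= n)%N ->
  gjoin (cd n a b) (cd n a' b') = cd n (maxn a a') (maxn b b').
Proof. by move=> *; rewrite /gjoin !cd_fst ?cd_snd. Qed.

Lemma kernel_join_congruence (T : Type) (f : G n -> T) (op : T -> T -> T) :
  {morph f : x y / gjoin x y >-> op x y} ->
  join_congruence (fun x y => f x = f y).
Proof.
move=> fM; split=> [//|x y -> //|x y z -> -> //|x y z fxy].
by rewrite !fM fxy.
Qed.

Variable pi : {perm 'I_n}.

Lemma beta_join_congruence : join_congruence (beta pi).
Proof.
split=> [x | x y bxy | x y z bxy byz | x y z bxy] R jcR gen;
  case: (jcR) => refl sym trans join.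
- exact: refl.
- exact: sym (bxy R jcR gen).
- exact: trans (bxy R jcR gen) (byz R jcR gen).
- exact: join (bxy R jcR gen).
Qed.

Lemma beta_generators (i : 'I_n) :
  beta pi (cd n i (pi i).+1) (cd n i.+1 (pi i).+1) /\
  beta pi (cd n i.+1 (pi i)) (cd n i.+1 (pi i).+1).
Proof. by split=> R _ gen; case: (gen i). Qed.

Definition outside (a b : nat) (x : G n) : bool := (a < x.1)%N || (b < x.2)%N.

Lemma outside_join a b : {morph outside a b : x y / gjoin x y >-> x || y}.
Proof.
move=> x y; rewrite /outside /gjoin /= !inordK ?ltnS ?geq_max ?leq_ord //.
by rewrite !leq_max orbACA.
Qed.

Lemma outside_cd (a b a' b' : nat) : (a' <= n)%N -> (b' <= n)%N ->
  outside a b (cd n a' b') = (a < a')%N || (b < b')%N.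
Proof. by move=> *; rewrite /outside cd_fst ?cd_snd. Qed.

Lemma beta_outside (i : 'I_n) (x y : G n) :
  beta pi x y -> outside i (pi i) x = outside i (pi i) y.
Proof.
move=> bxy; apply: (bxy (fun x y => outside i (pi i) x = outside i (pi i) y)).
  exact: kernel_join_congruence (@outside_join _ _).
move=> k; have lt_kn := ltn_ord k; have lt_pikn := ltn_ord (pi k).
rewrite !outside_cd ?(ltnW lt_kn) ?(ltnW lt_pikn) //.
have ltnS_neq a b : a != b -> (a < b.+1)%N = (a < b)%N.
  by move=> ne_ab; rewrite ltnS leq_eqVlt (negPf ne_ab).
have [-> | ne_ik] := eqVneq i k; first by rewrite !ltnSn !orbT.
have ne_piik : pi i != pi k by rewrite (inj_eq perm_inj).
by rewrite (ltnS_neq i k ne_ik) (ltnS_neq (pi i) (pi k) ne_piik).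
Qed.

End BetaPi.

Theorem lemma4p8 (n : nat) (pi : {perm 'I_n}) :
  forall i j : 'I_n,
    source_cell (beta pi) i.+1 j.+1 <-> j = pi i.
Proof.
move=> i j; have lt_in := ltn_ord i; have lt_jn := ltn_ord j.
have lt_pin := ltn_ord (pi i).
have [_ _ trans join] := beta_join_congruence pi.
have [row col] := beta_generators pi i.
split=> [[left_edge [bottom_edge not_diag]] | ->].
- have /(beta_outside i) := left_edge.
  rewrite !outside_cd ?(ltnW lt_in) //= ltnn ltnSn ltnS => /= le_pij.
  apply/val_inj/eqP; rewrite eqn_leq le_pij andbT leqNgt.
  apply/negP => lt_pij; apply: not_diag; apply: trans bottom_edge => /=.
  have := join _ _ (cd n 0 j) row; rewrite !gjoin_cd ?(ltnW lt_in) ?(ltnW lt_jn) //.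
  by rewrite !maxn0 (maxn_idPr lt_pij).
- split=> //; split=> // /(beta_outside i).
  by rewrite !outside_cd ?(ltnW lt_in) ?(ltnW lt_pin) //= !ltnn ltnSn.
Qed.
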